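(* Let $L\subseteq\Sigma^*$ be a regular language. Then $N^1(L)=O(1)$ if and only if $L\in\mathcal{C}om(\Sigma)$ (i.e. its syntactic monoid is commutative); otherwise $N^1(L)=\Omega(\log n)$.
   Context: Non-deterministic communication complexity: for $f:X\times Y\to\{0,1\}$, $N^1(f)$ is the minimum cost of a non-deterministic protocol for $f$; equivalently, up to an additive constant 2, $N^1(f)=\log_2 C^1(f)$, where $C^1(f)$ is the minimum number of rectangles $S\times T\subseteq X\times Y$ on which $f\equiv1$ whose union is $f^{-1}(1)$. For a language $L\subseteq\Sigma^*$, $N^1(L)(n)$ is $N^1$ of the function in which Alice receives $a_1,a_3,\dots,a_{2n-1}$, Bob receives $a_2,a_4,\dots,a_{2n}$, each $a_i\in\Sigma\cup\{\epsilon\}$ ($\epsilon$ the empty word), and the value is $1$ iff $a_1a_2\cdots a_{2n}\in L$. The syntactic monoid of $L$ is $\Sigma^*/\equiv_L$ where $x\equiv_L y$ iff for all $u,v\in\Sigma^*$, $uxv\in L\Leftrightarrow uyv\in L$. $\mathcal{C}om(\Sigma)$ denotes the set of regular languages over $\Sigma$ whose syntactic monoid is commutative. Asymptotics are as $n\to\infty$. *)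

From mathcomp Require Import all_boot.
Set Implicit Arguments. Unset Strict Implicit. Unset Printing Implicit Defensive.

Record dfa (S : finType) := Dfa {
  dfa_state : finType;
  dfa_start : dfa_state;
  dfa_step : dfa_state -> S -> dfa_state;
  dfa_accept : pred dfa_state }.

Definition dfa_accepts (S : finType) (A : dfa S) (w : seq S) : bool :=
  @dfa_accept S A (foldl (@dfa_step S A) (@dfa_start S A) w).

Definition regular (S : finType) (L : seq S -> bool) : Prop :=
  exists A : dfa S, forall w, L w = dfa_accepts A w.

(* Syntactic congruence and commutativity of the syntactic monoid:
   Sigma^*/=_L is commutative iff xy =_L yx for all words x, y. *)
Definition synt_equiv (S : finType) (L : seq S -> bool) (x y : seq S) : Prop :=
  forall u v : seq S, L (u ++ x ++ v) = L (u ++ y ++ v).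

Definition in_Com (S : finType) (L : seq S -> bool) : Prop :=
  forall x y : seq S, synt_equiv L (x ++ y) (y ++ x).

Definition is_one_cover (X Y : finType) (f : X -> Y -> bool)
    (R : {set {set X} * {set Y}}) : bool :=
  [forall r in R, forall x in r.1, forall y in r.2, f x y] &&
  [forall x, forall y, f x y ==> [exists r in R, (x \in r.1) && (y \in r.2)]].

Definition C1 (X Y : finType) (f : X -> Y -> bool) : nat :=
  \big[minn/#|{: {set X} * {set Y}}|]_(R : {set {set X} * {set Y}} | is_one_cover f R) #|R|.

(* N^1(f) := ceil(log2 C^1(f)); equal to the protocol cost up to an additive constant. *)
Definition N1 (X Y : finType) (f : X -> Y -> bool) : nat := up_log 2 (C1 f).

(* Input of length 2n: Alice holds a_1,a_3,..., Bob a_2,a_4,...; None = epsilon. *)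
Definition oword (S : Type) (o : option S) : seq S :=
  if o is Some a then [:: a] else [::].

Definition interleave (S : finType) (n : nat)
    (x y : {ffun 'I_n -> option S}) : seq S :=
  flatten [seq oword (x i) ++ oword (y i) | i <- enum 'I_n].

Definition N1L (S : finType) (L : seq S -> bool) (n : nat) : nat :=
  N1 (fun x y : {ffun 'I_n -> option S} => L (interleave x y)).

Definition bounded (g : nat -> nat) : Prop := exists B, forall n, g n <= B.

Definition omega_log (g : nat -> nat) : Prop :=
  exists c N0 : nat, forall n, N0 <= n -> trunc_log 2 n <= c * g n.

From mathcomp Require Import all_boot zify.
From Stdlib Require Import Classical.
Set Implicit Arguments. Unset Strict Implicit. Unset Printing Implicit Defensive.

(* If the syntactic monoid is commutative, the interleaved word is L-equivalent
   to Alice's letters followed by Bob's, so a DFA for L gives a cover with one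
   rectangle per state, independently of n.  Otherwise there are u, x, y, v with
   uxyv in L and uyxv not in L.  Cut the input into m ~ n / (|x| + |y|) blocks;
   Alice puts x into block k and Bob puts y into block l, so the word read is
   u xy v when k <= l and u yx v when k > l.  These m input pairs form a fooling
   set, hence C^1 >= m and N^1 >= log m = log n - O(1). *)

Section InterleaveSeq.
Variable S : finType.

Definition interleave_seq (A B : seq (option S)) : seq S :=
  flatten [seq oword p.1 ++ oword p.2 | p <- zip A B].

Lemma interleave_seq_cat A1 A2 B1 B2 : size A1 = size B1 ->
  interleave_seq (A1 ++ A2) (B1 ++ B2) = interleave_seq A1 B1 ++ interleave_seq A2 B2.
Proof. by move=> eq_sz; rewrite /interleave_seq zip_cat // map_cat flatten_cat. Qed.

Lemma interleave_seq_SomeNone w : interleave_seq (map Some w) (nseq (size w) None) = w.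
Proof. by elim: w => //= a w IHw; rewrite /interleave_seq /= -/(interleave_seq _ _) IHw. Qed.

Lemma interleave_seq_NoneSome w : interleave_seq (nseq (size w) None) (map Some w) = w.
Proof. by elim: w => //= a w IHw; rewrite /interleave_seq /= -/(interleave_seq _ _) IHw. Qed.

Lemma interleave_seq_None k : interleave_seq (nseq k None) (nseq k None) = [::].
Proof. by elim: k => //= k IHk; rewrite /interleave_seq /= -/(interleave_seq _ _) IHk. Qed.

Lemma interleave_seq_flatten (T : Type) (s : seq T) (F G : T -> seq (option S)) :
  (forall t, size (F t) = size (G t)) ->
  interleave_seq (flatten (map F s)) (flatten (map G s)) =
  flatten [seq interleave_seq (F t) (G t) | t <- s].
Proof.
move=> eq_sz; suff: size (flatten (map F s)) = size (flatten (map G s)) /\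
  interleave_seq (flatten (map F s)) (flatten (map G s)) =
  flatten [seq interleave_seq (F t) (G t) | t <- s] by case.
elim: s => [|t s [IHsz IHs]] //=.
by rewrite !size_cat interleave_seq_cat // eq_sz IHsz IHs.
Qed.

Lemma interleave_nth n (A B : seq (option S)) : size A = n -> size B = n ->
  interleave [ffun i : 'I_n => nth None A i] [ffun i : 'I_n => nth None B i] =
  interleave_seq A B.
Proof.
move=> szA szB; rewrite /interleave /interleave_seq.
have -> : zip A B = [seq (nth None A i, nth None B i) | i <- iota 0 n].
  apply: (@eq_from_nth _ (None, None)).
    by rewrite size_zip size_map size_iota szA szB minnn.
  move=> i; rewrite size_zip szA szB minnn => ltin.
  by rewrite nth_zip ?szA ?szB // (nth_map 0) ?size_iota // nth_iota.
rewrite -val_enum_ord -!map_comp; congr flatten; apply: eq_map => i /=.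
by rewrite !ffunE.
Qed.

End InterleaveSeq.

Section FoolingWords.
Variable S : finType.
Variables x y u v : seq S.

Definition blockA (b : bool) : seq (option S) :=
  if b then map Some x ++ nseq (size y) None else nseq (size x + size y) None.
Definition blockB (b : bool) : seq (option S) :=
  if b then nseq (size x) None ++ map Some y else nseq (size x + size y) None.

Lemma size_blockA b : size (blockA b) = size x + size y.
Proof. by case: b; rewrite /blockA ?size_cat ?size_map ?size_nseq. Qed.

Lemma size_blockB b : size (blockB b) = size x + size y.
Proof. by case: b; rewrite /blockB ?size_cat ?size_map ?size_nseq. Qed.

Lemma interleave_block b c :
  interleave_seq (blockA b) (blockB c) = (if b then x else [::]) ++ (if c then y else [::]).
Proof.
case: b; case: c; rewrite /blockA /blockB ?nseqD;
  rewrite interleave_seq_cat ?size_map ?size_nseq //.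
- by rewrite interleave_seq_SomeNone interleave_seq_NoneSome.
- by rewrite interleave_seq_SomeNone interleave_seq_None cats0.
- by rewrite interleave_seq_None interleave_seq_NoneSome.
- by rewrite !interleave_seq_None.
Qed.

Lemma flatten_marked k l m :
  flatten [seq (if j == k then x else [::]) ++ (if j == l then y else [::]) | j <- iota 0 m] =
  if k <= l then (if k < m then x else [::]) ++ (if l < m then y else [::])
  else (if l < m then y else [::]) ++ (if k < m then x else [::]).
Proof.
elim: m => [|m IHm]; first by case: ifP.
rewrite -addn1 iotaD map_cat flatten_cat IHm /= cats0 add0n.
have -> : (k < m + 1) = (k < m) || (m == k) by lia.
have -> : (l < m + 1) = (l < m) || (m == l) by lia.
by case: (leqP k l) => ?; case: (ltnP k m) => ?; case: (ltnP l m) => ?;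
  case: (eqVneq m k) => ?; case: (eqVneq m l) => ?; rewrite /= ?cats0 ?catA //; lia.
Qed.

Variables m pad : nat.

Definition aliceInput k : seq (option S) :=
  map Some u ++ flatten [seq blockA (j == k) | j <- iota 0 m] ++ nseq (size v + pad) None.
Definition bobInput l : seq (option S) :=
  nseq (size u) None ++ flatten [seq blockB (j == l) | j <- iota 0 m] ++
  map Some v ++ nseq pad None.

Lemma size_flatten_blocks (B : bool -> seq (option S)) k :
  (forall b, size (B b) = size x + size y) ->
  size (flatten [seq B (j == k) | j <- iota 0 m]) = m * (size x + size y).
Proof.
move=> szB; rewrite -[in RHS](size_iota 0 m).
by elim: (iota 0 m) => //= j s IHs; rewrite size_cat szB IHs mulSn.
Qed.

Lemma size_aliceInput k : size (aliceInput k) = size u + m * (size x + size y) + size v + pad.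
Proof.
by rewrite /aliceInput !size_cat size_map size_nseq (size_flatten_blocks _ size_blockA); lia.
Qed.

Lemma size_bobInput l : size (bobInput l) = size u + m * (size x + size y) + size v + pad.
Proof.
by rewrite /bobInput !size_cat size_map !size_nseq (size_flatten_blocks _ size_blockB); lia.
Qed.

Lemma interleave_fooling k l : k < m -> l < m ->
  interleave_seq (aliceInput k) (bobInput l) = u ++ (if k <= l then x ++ y else y ++ x) ++ v.
Proof.
move=> ltkm ltlm; have eq_sz j : size (blockA (j == k)) = size (blockB (j == l)).
  by rewrite size_blockA size_blockB.
rewrite /aliceInput /bobInput nseqD.
rewrite interleave_seq_cat ?size_map ?size_nseq // interleave_seq_SomeNone.
rewrite interleave_seq_cat; last first.
  by rewrite !size_flatten_blocks // => b; rewrite ?size_blockA ?size_blockB.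
rewrite interleave_seq_flatten // (eq_map (fun j => interleave_block _ _)) flatten_marked ltkm ltlm.
rewrite interleave_seq_cat ?size_nseq ?size_map //.
rewrite interleave_seq_NoneSome interleave_seq_None cats0.
by case: ifP.
Qed.

End FoolingWords.

Section CoverNumber.
Variables X Y : finType.
Variable f : X -> Y -> bool.

Definition one_rect (r : {set X} * {set Y}) : bool :=
  [forall x in r.1, forall y in r.2, f x y].

Lemma one_rectP r x y : one_rect r -> x \in r.1 -> y \in r.2 -> f x y.
Proof. by move=> /forall_inP/(_ x) Hr xr yr; move/forall_inP: (Hr xr); apply. Qed.

Lemma one_coverP R x y : is_one_cover f R -> f x y ->
  exists2 r, r \in R & (x \in r.1) && (y \in r.2).
Proof. by case/andP=> _ /forallP/(_ x)/forallP/(_ y)/implyP H /H/existsP[r /andP[]]; exists r. Qed.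

Lemma C1_le_cover R : is_one_cover f R -> C1 f <= #|R|.
Proof.
rewrite /C1 => covR; move: (mem_index_enum R).
elim: (index_enum _) => // R' s IHs; rewrite inE big_cons => /orP[/eqP <-|Rs].
  by rewrite covR geq_minl.
by case: ifP => _; rewrite ?geq_min IHs ?orbT.
Qed.

Lemma C1_le_factor (Q : finType) (g : X -> Q) (h : Q -> Y -> bool) :
  (forall x y, f x y = h (g x) y) -> C1 f <= #|Q|.
Proof.
move=> fE; pose rect q := ([set x | g x == q], [set y | h q y]).
apply: leq_trans (C1_le_cover (R := [set rect q | q : Q]) _) (leq_imset_card _ _).
apply/andP; split.
  apply/forall_inP => _ /imsetP[q _ ->]; apply/forall_inP => x; rewrite inE => /eqP gx.
  by apply/forall_inP => y; rewrite inE fE gx.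
apply/forallP => x; apply/forallP => y; apply/implyP; rewrite fE => hxy.
by apply/existsP; exists (rect (g x)); rewrite imset_f // !inE eqxx.
Qed.

Variables (m : nat) (A : 'I_m -> X) (B : 'I_m -> Y).
Hypothesis fool_diag : forall k, f (A k) (B k).
Hypothesis fool_off : forall k l, k != l -> ~~ f (A k) (B l) || ~~ f (A l) (B k).

Lemma fooling_rect_inj r k l : one_rect r ->
  A k \in r.1 -> B k \in r.2 -> A l \in r.1 -> B l \in r.2 -> k = l.
Proof.
move=> Hr Ak Bk Al Bl; apply/eqP/negPn/negP => /fool_off.
by rewrite !(one_rectP Hr).
Qed.

Lemma fooling_set_le_C1 : m <= C1 f.
Proof.
have singleton_rect k : one_rect ([set A k], [set B k]).
  by apply/forall_inP => x /set1P->; apply/forall_inP => y /set1P->.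
(* [C1] is a minimum whose default value must be bounded as well. *)
have le_m_D : m <= #|{: {set X} * {set Y}}|.
  rewrite -[m]card_ord; apply: (leq_card (fun k => ([set A k], [set B k]))).
  move=> k l [/set1_inj Akl /set1_inj Bkl].
  by apply: (fooling_rect_inj (singleton_rect k)); rewrite /= ?Akl ?Bkl set11.
apply: (big_ind (fun z => m <= z)) => // [a b ma mb|R covR]; first by rewrite leq_min ma mb.
have /andP[/forall_inP cov_rect _] := covR.
have rect_of k : {r | r \in R & (A k \in r.1) && (B k \in r.2)}.
  by apply: sig2W; apply: one_coverP.
pose rect k := s2val (rect_of k).
have rectP k : [/\ rect k \in R, A k \in (rect k).1 & B k \in (rect k).2].
  by have /andP[] := s2valP' (rect_of k); split; rewrite // (s2valP (rect_of k)).
have rect_inj : injective rect.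
  move=> k l eq_rect; have [_ Ak Bk] := rectP k; have [Rl Al Bl] := rectP l.
  by apply: (fooling_rect_inj (cov_rect _ Rl)); rewrite // -eq_rect.
rewrite -[m]card_ord -(card_codom rect_inj).
by apply/subset_leq_card/subsetP => _ /codomP[k ->]; case: (rectP k).
Qed.

End CoverNumber.

Definition comm_fun (S : finType) (L : seq S -> bool) n (x y : {ffun 'I_n -> option S}) : bool :=
  L (interleave x y).
Arguments comm_fun {S} L n x y.

Lemma N1LE (S : finType) (L : seq S -> bool) n : N1L L n = up_log 2 (C1 (comm_fun L n)).
Proof. by []. Qed.

Section Commutative.
Variables (S : finType) (L : seq S -> bool).
Hypothesis comL : in_Com L.

Lemma in_Com_flatten_unzip (T : Type) (a b : T -> seq S) (s : seq T) u v :
  L (u ++ flatten [seq a t ++ b t | t <- s] ++ v) =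
  L (u ++ flatten (map a s) ++ flatten (map b s) ++ v).
Proof.
elim: s u => [|t s IHs] u //=.
rewrite -!catA (catA u) (catA (u ++ a t)) IHs -!catA.
by have := comL (b t) (flatten (map a s)) (u ++ a t) (flatten (map b s) ++ v); rewrite -!catA.
Qed.

Definition word n (z : {ffun 'I_n -> option S}) : seq S :=
  flatten [seq oword (z i) | i <- enum 'I_n].

Lemma interleave_in_Com n (x y : {ffun 'I_n -> option S}) :
  L (interleave x y) = L (word x ++ word y).
Proof.
have := in_Com_flatten_unzip (fun i => oword (x i)) (fun i => oword (y i)) (enum 'I_n) [::] [::].
by rewrite /= !cats0.
Qed.

(* The state reached after reading Alice's letters determines the value. *)
Lemma N1L_le_in_Com (A : dfa S) : (forall w, L w = dfa_accepts A w) ->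
  forall n, N1L L n <= up_log 2 #|dfa_state A|.
Proof.
move=> LA n; rewrite N1LE; apply/leq_up_log.
pose run q w := foldl (@dfa_step S A) q w.
apply: (@C1_le_factor _ _ _ _ (fun x => run (dfa_start A) (word x))
          (fun q y => dfa_accept (run q (word y)))) => x y.
by rewrite /comm_fun interleave_in_Com LA /dfa_accepts foldl_cat.
Qed.

End Commutative.

Section NonCommutative.
Variables (S : finType) (L : seq S -> bool).

Lemma not_in_Com_witness : ~ in_Com L ->
  exists x y u v, L (u ++ (x ++ y) ++ v) && ~~ L (u ++ (y ++ x) ++ v).
Proof.
move=> ncomL; apply: NNPP => no_wit; apply: ncomL => x y u v.
have [Lxy|nLxy] := boolP (L (u ++ (x ++ y) ++ v));
  have [Lyx|nLyx] := boolP (L (u ++ (y ++ x) ++ v)); rewrite ?Lxy ?Lyx //.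
- by case: no_wit; exists x, y, u, v; rewrite Lxy nLyx.
- by case: no_wit; exists y, x, u, v; rewrite Lyx nLxy.
Qed.

Lemma fooling_le_C1 x y u v n m :
  L (u ++ (x ++ y) ++ v) -> ~~ L (u ++ (y ++ x) ++ v) ->
  size u + m * (size x + size y) + size v <= n -> m <= C1 (comm_fun L n).
Proof.
move=> Lxy nLyx len_n; set pad := n - (size u + m * (size x + size y) + size v).
have szA k : size (aliceInput x y u v m pad k) = n by rewrite size_aliceInput; lia.
have szB l : size (bobInput x y u v m pad l) = n by rewrite size_bobInput; lia.
pose inA (k : 'I_m) := [ffun i : 'I_n => nth None (aliceInput x y u v m pad k) i].
pose inB (l : 'I_m) := [ffun i : 'I_n => nth None (bobInput x y u v m pad l) i].
have comm_funE (k l : 'I_m) :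
  comm_fun L n (inA k) (inB l) = L (u ++ (if k <= l then x ++ y else y ++ x) ++ v).
  by rewrite /comm_fun interleave_nth // interleave_fooling.
apply: (@fooling_set_le_C1 _ _ _ _ inA inB) => [k|k l ne_kl].
  by rewrite comm_funE leqnn.
rewrite !comm_funE; case: ltngtP => [_|_|/val_inj eq_kl]; rewrite ?nLyx ?orbT //.
by rewrite eq_kl eqxx in ne_kl.
Qed.

(* Use [(n - |u| - |v|) %/ (|x| + |y|)] blocks. *)
Lemma C1_linear_of_not_in_Com : ~ in_Com L ->
  exists c, forall n, n <= c * (C1 (comm_fun L n)).+1.
Proof.
case/not_in_Com_witness => x [y [u [v /andP[Lxy nLyx]]]].
have K_gt0 : 0 < size x + size y.
  by case: x Lxy nLyx => [|a x] //; case: y => [|b y] //= ->.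
set K := size x + size y.
exists (K + (size u + size v)) => n.
have [small_n|le_uv_n] := ltnP n (size u + size v); first by nia.
set m := (n - (size u + size v)) %/ K.
have le_m_C1 : m <= C1 (comm_fun L n).
  apply: (fooling_le_C1 Lxy nLyx); rewrite -/K.
  have := leq_divM (n - (size u + size v)) K; rewrite -/m; lia.
have := ltn_ceil (n - (size u + size v)) K_gt0; rewrite -/m; nia.
Qed.

End NonCommutative.

Lemma omega_log_up_log (g : nat -> nat) c :
  (forall n, n <= c * (g n).+1) -> omega_log (fun n => up_log 2 (g n)).
Proof.
move=> lin_g; exists c.+1, c.*2.+1 => n lt_2c_n; set l := up_log 2 (g n).
have le_n := lin_g n.
have l_gt0 : 0 < l.
  rewrite up_log_gt0 /= ltnNge; apply/negP => le_g1.
  have := leq_mul (leqnn c) (le_g1 : (g n).+1 <= 2); lia.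
have n_lt : n < 2 ^ (c + l).+1.
  rewrite -addnS expnD; apply: (leq_ltn_trans le_n).
  apply: (@leq_ltn_trans (c * 2 ^ l.+1)); last by rewrite ltn_pmul2r ?expn_gt0 // ltn_expl.
  rewrite leq_mul2l expnS; have := up_logP (g n) (isT : 1 < 2).
  have := expn_gt0 2 l; rewrite -/l; lia.
have := trunc_logP (isT : 1 < 2) (leq_ltn_trans (leq0n c.*2) lt_2c_n).
move/leq_ltn_trans/(_ n_lt); rewrite ltn_exp2l // ltnS => /leq_trans; apply.
by rewrite mulSn addnC leq_add2l leq_pmulr.
Qed.

Lemma bounded_not_omega_log (g : nat -> nat) : bounded g -> ~ omega_log g.
Proof.
move=> [B le_gB] [c [N0 log_le]]; set n := N0 + 2 ^ (c * B).+1.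
have := log_le n (leq_addr _ _).
have := trunc_log_max (isT : 1 < 2) (leq_addl N0 (2 ^ (c * B).+1)); rewrite -/n.
have := leq_mul (leqnn c) (le_gB n); lia.
Qed.

Lemma not_in_Com_omega_log (S : finType) (L : seq S -> bool) :
  ~ in_Com L -> omega_log (N1L L).
Proof. by case/C1_linear_of_not_in_Com => c /omega_log_up_log. Qed.

Theorem mainTheorem7 (S : finType) (L : seq S -> bool) (HL : regular L) :
  (bounded (N1L L) <-> in_Com L) /\ (~ in_Com L -> omega_log (N1L L)).
Proof.
split; last exact: not_in_Com_omega_log.
split=> [bddL | comL].
  by apply: NNPP => /not_in_Com_omega_log; apply: bounded_not_omega_log.
have [A LA] := HL; exists (up_log 2 #|dfa_state A|).
exact: N1L_le_in_Com.
Qed.
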